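(* Let $\mathcal F$ be a normal TDD over a finite index set $I$ equipped with a linear order $\prec$. Then every terminal node of $\mathcal F$ has value $0$ or $1$. Moreover, if $v$ is a non-terminal node of $\mathcal F$ with $\Phi(v)\neq 0$, and $w_0,w_1$ are the weights on its low-edge and high-edge respectively, then $w_0=1$ or $w_1=1$.
   Context: Indices take values in $\{0,1\}$; a tensor over $I$ is a map $\{0,1\}^I\to\mathbb{C}$, and a tensor over a subset of $I$ is regarded as a tensor over $I$ not depending on the other indices. Each index $x$ is regarded as the tensor with $x(c)=c$, and $\overline{x}(c):=1-c$; sums, products and scalar multiples of tensors are pointwise. A TDD (Tensor Decision Diagram) over $I$ is $\mathcal F=(V,E,index,value,low,high,w)$ where: $V$ is a finite set of nodes partitioned into non-terminal nodes $V_N$ and terminal nodes $V_T$, forming a rooted directed acyclic graph with root $r_{\mathcal F}$; $index:V_N\to I$; $value:V_T\to\mathbb{C}$; $low,high:V_N\to V$ give the 0- and 1-successors; the edges are the low-edges $(v,low(v))$ and high-edges $(v,high(v))$ for $v\in V_N$, together with a unique incoming edge $e_r$ of the root having no source; $w$ assigns each edge a complex weight, and $w_{\mathcal F}:=w(e_r)$. Each node $v$ represents a tensor $\Phi(v)$: $\Phi(v)=value(v)$ if $v$ is terminal, and otherwise $\Phi(v)=w_0\cdot\overline{x_v}\cdot\Phi(low(v))+w_1\cdot x_v\cdot\Phi(high(v))$, where $x_v=index(v)$ and $w_0,w_1$ are the weights on the low- and high-edge of $v$. Normal tensors (w.r.t. $\prec$): order $\{0,1\}^I$ lexicographically (compare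 at the $\prec$-smallest differing index, $0<1$); the pivot of $\phi$ is the lexicographically smallest $\vec a$ with $|\phi(\vec a)|=\max_{\vec b}|\phi(\vec b)|$; $\phi$ is normal if $\phi=0$ or $\phi$ takes value $1$ at its pivot. A TDD $\mathcal F$ is normal if $\Phi(v)$ is a normal tensor for every node $v$ of $\mathcal F$.
   Formalization: The TDD $\mathcal F$ is also ordered: for every non-terminal node v, index(v) ≺ index(low(v)) when low(v) is non-terminal, and index(v) ≺ index(high(v)) when high(v) is non-terminal. The paper assumes this as well. *)

From HB Require Import structures.
From mathcomp Require Import all_boot all_order all_algebra.
Set Implicit Arguments. Unset Strict Implicit. Unset Printing Implicit Defensive.
Import Order.TTheory GRing.Theory Num.Theory.
Local Open Scope ring_scope.

(* Complex numbers are modelled by an arbitrary numClosedFieldType C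
   (e.g. complex R for R : rcfType, or algC); |.| is its norm. *)

Section TDDDefs.
Variables (I : finType) (C : numClosedFieldType).

Definition assignment := {ffun I -> bool}.
Definition tensor := assignment -> C.

Definition idx_tensor (x : I) : tensor := fun a => (a x : nat)%:R.
Definition idx_tensor_bar (x : I) : tensor := fun a => 1 - (a x : nat)%:R.

Definition zero_tensor : tensor := fun _ => 0.

(* lexicographic order on {0,1}^I w.r.t. prec: compare at the
   prec-smallest differing index, 0 < 1 *)
Definition lexlt (prec : rel I) (a b : assignment) : bool :=
  [exists i, [&& ~~ a i, b i & [forall j, prec j i ==> (a j == b j)]]].

Definition is_pivot (prec : rel I) (phi : tensor) (a : assignment) : Prop :=
  (forall b, `|phi b| <= `|phi a|) /\
  (forall b, `|phi b| = `|phi a| -> b = a \/ lexlt prec a b).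

Definition normal_tensor (prec : rel I) (phi : tensor) : Prop :=
  phi = zero_tensor \/ exists a, is_pivot prec phi a /\ phi a = 1.

End TDDDefs.

(* Nodes form a finite type; [kind v = None] means v is
   terminal, [kind v = Some x] means v is non-terminal with index x.
   [low], [high], [wlow], [whigh] are only meaningful on non-terminal nodes
   ([wlow v], [whigh v] are the weights of the low- and high-edge of v),
   [value] only on terminal nodes, [wroot] is the weight of the root edge. *)
Record TDD (I : finType) (C : numClosedFieldType) := MkTDD {
  node : finType;
  root : node;
  kind : node -> option I;
  value : node -> C;
  low : node -> node;
  high : node -> node;
  wlow : node -> C;
  whigh : node -> C;
  wroot : C
}.

Arguments root {I C} F : rename.
Arguments kind {I C} F _ : rename.
Arguments value {I C} F _ : rename.
Arguments low {I C} F _ : rename.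
Arguments high {I C} F _ : rename.
Arguments wlow {I C} F _ : rename.
Arguments whigh {I C} F _ : rename.
Arguments wroot {I C} F : rename.

Unset Implicit Arguments.
Section TDDSem.
Variables (I : finType) (C : numClosedFieldType).

Definition succ (F : TDD I C) : rel (node F) :=
  fun u w => (kind F u != None) && ((w == low F u) || (w == high F u)).

Definition rooted (F : TDD I C) : Prop :=
  forall v, connect (succ F) (root F) v.

(* ordered: indices strictly increase along edges between non-terminal nodes
   (this also makes the graph acyclic) *)
Definition ordered (prec : rel I) (F : TDD I C) : Prop :=
  forall (v : node F) x, kind F v = Some x ->
    (forall y, kind F (low F v) = Some y -> prec x y) /\
    (forall y, kind F (high F v) = Some y -> prec x y).

(* Phi is the semantics of the nodes: it satisfies the defining equations
   (unique since the graph is acyclic) *)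
Definition Phi_spec (F : TDD I C) (Phi : node F -> tensor I C) : Prop :=
  forall (v : node F), match kind F v with
  | None => Phi v = (fun _ => value F v)
  | Some x => Phi v = (fun a => wlow F v * @idx_tensor_bar I C x a * Phi (low F v) a
                               + whigh F v * @idx_tensor I C x a * Phi (high F v) a)
  end.

Definition normal_TDD (prec : rel I) (F : TDD I C) (Phi : node F -> tensor I C)
  : Prop := forall v, normal_tensor prec (Phi v).

End TDDSem.
Arguments succ {I C} F.
Arguments rooted {I C} F.
Arguments ordered {I C} prec F.
Arguments Phi_spec {I C} F Phi.
Arguments normal_TDD {I C} prec F Phi.

From mathcomp Require Import all_boot all_order all_algebra.
Import Order.TTheory GRing.Theory Num.Theory.

Set Implicit Arguments.
Unset Strict Implicit.
Unset Printing Implicit Defensive.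
Local Open Scope ring_scope.

(* Terminal nodes represent constant tensors, and a normal constant is 0 or 1.
   For a non-terminal node v with index x and pivot a, on the half-space
   {b | b x = a x} the tensor Phi v is w * L, where w is the weight and L the
   tensor of the corresponding successor; by the ordering, L does not depend
   on x.  If c is the pivot of L, then Phi v at c[x := a x] equals w, and
   1 = w * L a; as both |Phi v| and |L| are bounded by 1, |w| = |L a| = 1.
   So c[x := a x] is a maximiser of Phi v and a[x := c x] one of L, and the
   minimality of both pivots in the lexicographic order forces w = 1. *)

Definition set_idx (I : finType) (c : assignment I) (x : I) (t : bool) :
  assignment I := [ffun j => if j == x then t else c j].

Lemma set_idx_id (I : finType) (c : assignment I) x t : set_idx c x t x = t.
Proof. by rewrite ffunE eqxx. Qed.

Lemma set_idx_other (I : finType) (c : assignment I) x t j :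
  j != x -> set_idx c x t j = c j.
Proof. by rewrite ffunE => /negbTE ->. Qed.

Section LexicographicOrder.
Variables (I : finType) (prec : rel I).
Hypothesis prec_total : forall i j, i != j -> prec i j || prec j i.

Lemma lexlt_set_idxP (a c : assignment I) x :
  lexlt prec c (set_idx a x (c x)) ->
  exists2 i, i != x &
    [/\ ~~ c i, a i & forall j, j != x -> prec j i -> c j = a j].
Proof.
case/existsP=> i /and3P[ci ai /forallP ci_min].
have ix : i != x.
  by apply: contraTneq ai => ix; rewrite ix set_idx_id -ix.
exists i => //; split=> [//||j jx ji]; first by rewrite set_idx_other in ai.
by move/implyP/(_ ji)/eqP: (ci_min j); rewrite set_idx_other.
Qed.

Lemma lexlt_set_idx_asym (a c : assignment I) x :
  lexlt prec c (set_idx a x (c x)) -> ~~ lexlt prec a (set_idx c x (a x)).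
Proof.
case/lexlt_set_idxP=> i ix [ci ai c_eq]; apply/negP.
case/lexlt_set_idxP=> k kx [ak ck a_eq].
have [ik|ik] := eqVneq i k; first by rewrite -ik ai in ak.
case/orP: (prec_total ik) => [/(a_eq i ix)|/(c_eq k kx)] e.
  by move: ci; rewrite -e ai.
by move: ak; rewrite -e ck.
Qed.

End LexicographicOrder.

Definition indep_of (I : finType) (C : numClosedFieldType) (x : I)
  (phi : tensor I C) : Prop :=
  forall a b : assignment I, (forall j, j != x -> a j = b j) -> phi a = phi b.

Section Semantics.
Variables (I : finType) (C : numClosedFieldType) (prec : rel I).
Hypotheses (prec_irr : irreflexive prec) (prec_trans : transitive prec).
Variables (F : TDD I C) (Phi : node F -> tensor I C).
Hypotheses (F_ordered : ordered prec F) (PhiP : Phi_spec F Phi).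

Definition index_after (i : I) (u : node F) : Prop :=
  forall y, kind F u = Some y -> prec i y.

Definition indices_after (u : node F) : nat :=
  #|[pred j | if kind F u is Some y then prec y j else false]|.

Lemma indices_after_succ u y w :
  kind F u = Some y -> kind F w != None -> index_after y w ->
  (indices_after w < indices_after u)%N.
Proof.
case kw: (kind F w) => [z|] // ku _ yw.
rewrite /indices_after ku kw; apply: proper_card; apply/properP; split.
  by apply/subsetP => j; rewrite !inE; apply: prec_trans (yw z kw).
by exists z; rewrite !inE ?prec_irr ?(yw z kw).
Qed.

Lemma Phi_terminal v : kind F v = None -> Phi v = fun=> value F v.
Proof. by move=> kv; have := PhiP v; rewrite kv. Qed.

Lemma Phi_branch v x (b : assignment I) : kind F v = Some x ->
  Phi v b = if b x then whigh F v * Phi (high F v) b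
            else wlow F v * Phi (low F v) b.
Proof.
move=> kv; have := PhiP v; rewrite kv => ->.
by rewrite /idx_tensor /idx_tensor_bar; case: (b x); rewrite /= ?subrr ?subr0;
  rewrite !mulr1 !mulr0 !mul0r ?addr0 ?add0r.
Qed.

Lemma Phi_indep i u : index_after i u -> indep_of i (Phi u).
Proof.
move=> + a b ab; elim: {u}_.+1 {-2}u (ltnSn (indices_after u)) => // n IH u.
move=> u_n iu; case ku: (kind F u) => [y|]; last by rewrite Phi_terminal.
have [yl yh] := F_ordered ku.
have ab_y : a y = b y.
  by apply: ab; apply: contraTneq (iu y ku) => ->; rewrite prec_irr.
have succ_eq w : index_after y w -> Phi w a = Phi w b.
  move=> yw; case kw: (kind F w) => [z|]; last by rewrite Phi_terminal.
  apply: IH => [|z' kz']; last exact: prec_trans (iu y ku) (yw z' kz').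
  rewrite ltnS in u_n; apply: leq_trans u_n.
  by apply: indices_after_succ ku _ yw; rewrite kw.
by rewrite !(Phi_branch _ ku) ab_y (succ_eq _ yl) (succ_eq _ yh).
Qed.

End Semantics.

Section NormalTensors.
Variables (I : finType) (C : numClosedFieldType) (prec : rel I).

Lemma normal_const (c : C) :
  normal_tensor prec (fun _ : assignment I => c) -> c = 0 \/ c = 1.
Proof.
case=> [c0|[_ [_ ->]]]; last by right.
by left; have := congr1 (@^~ [ffun=> false]) c0.
Qed.

Hypothesis prec_total : forall i j, i != j -> prec i j || prec j i.

Section WeightedHalfSpace.
Variables (f L : tensor I C) (w : C) (x : I) (a : assignment I).
Hypotheses (f_half : forall b : assignment I, b x = a x -> f b = w * L b)
  (L_indep : indep_of x L)
  (a_pivot : is_pivot prec f a) (fa : f a = 1).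
Variables (c : assignment I) (c_pivot : is_pivot prec L c) (Lc : L c = 1).

Lemma weight_at_set_idx_pivot : f (set_idx c x (a x)) = w.
Proof.
rewrite f_half ?set_idx_id // (@L_indep _ c) ?Lc ?mulr1 //.
exact: set_idx_other.
Qed.

Lemma norm_weight_eq1 : `|w| = 1 /\ `|L a| = 1.
Proof.
have w_le1 : `|w| <= 1.
  by rewrite -normr1 -fa -weight_at_set_idx_pivot; apply: a_pivot.1.
have La_le1 : `|L a| <= 1 by rewrite -normr1 -Lc; apply: c_pivot.1.
have wLa : `|w| * `|L a| = 1 by rewrite -normrM -f_half // fa normr1.
suff w1 : `|w| = 1 by split=> //; rewrite w1 mul1r in wLa.
apply/eqP; rewrite eq_le w_le1 -wLa.
by rewrite ler_piMr // normr_ge0.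
Qed.

Lemma pivot_weight_eq1 : w = 1.
Proof.
have [w1 La1] := norm_weight_eq1.
have wLa : w * L a = 1 by rewrite -f_half.
have L_set_idx : L (set_idx a x (c x)) = L a.
  by apply: L_indep => j; apply: set_idx_other.
have L_tie : `|L (set_idx a x (c x))| = `|L c|.
  by rewrite L_set_idx La1 Lc normr1.
have f_tie : `|f (set_idx c x (a x))| = `|f a|.
  by rewrite weight_at_set_idx_pivot fa w1 normr1.
case: (c_pivot.2 _ L_tie) => [e|lt_ca].
  by rewrite -L_set_idx e Lc mulr1 in wLa.
case: (a_pivot.2 _ f_tie) => [e|lt_ac].
  by rewrite -weight_at_set_idx_pivot e.
by move: (lexlt_set_idx_asym prec_total lt_ca); rewrite lt_ac.
Qed.

End WeightedHalfSpace.

Lemma normal_half_weight_eq1 (f L : tensor I C) (w : C) x (a : assignment I) :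
  (forall b : assignment I, b x = a x -> f b = w * L b) ->
  indep_of x L ->
  is_pivot prec f a -> f a = 1 -> normal_tensor prec L -> w = 1.
Proof.
move=> f_half L_indep a_pivot fa [L0|[c [c_pivot Lc]]].
  by move: fa; rewrite f_half // L0 mulr0 => /eqP; rewrite eq_sym oner_eq0.
exact: (pivot_weight_eq1 f_half L_indep a_pivot fa c_pivot Lc).
Qed.

End NormalTensors.

Theorem lemma3 (I : finType) (C : numClosedFieldType) (prec : rel I)
    (prec_irr : irreflexive prec) (prec_trans : transitive prec)
    (prec_total : forall i j, i != j -> prec i j || prec j i)
    (F : TDD I C) (Phi : node F -> tensor I C) :
  rooted F -> ordered prec F -> Phi_spec F Phi -> normal_TDD prec F Phi ->
  (forall v, kind F v = None -> value F v = 0 \/ value F v = 1) /\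
  (forall v x, kind F v = Some x -> Phi v <> @zero_tensor I C ->
     wlow F v = 1 \/ whigh F v = 1).
Proof.
move=> _ F_ordered PhiP F_normal; split=> [v kv|v x kv Phi_nz].
  by apply: (normal_const (prec := prec)); rewrite -(Phi_terminal PhiP kv).
case: (F_normal v) => [//|[a [a_pivot Phi_a]]].
have [x_low x_high] := F_ordered v x kv.
have : (if a x then whigh F v else wlow F v) = 1.
  apply: (normal_half_weight_eq1 prec_total (x := x)
           (L := Phi (if a x then high F v else low F v)) _ _ a_pivot) => //.
  - by move=> b bx; rewrite (Phi_branch PhiP _ kv) bx; case: (a x).
  - by apply: (Phi_indep prec_irr prec_trans F_ordered PhiP); case: (a x).
by case: (a x); [right | left].
Qed.
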